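(* The simplicial complex $\Sigma_D^q$ is shellable.
   Context: $D$ is a finite directed multigraph without loops on vertex set $V$ with arc set $\mathbb E$ (arc $e$ has head $e_+$, tail $e_-$), and $q\in V$ is such that every vertex is reachable from $q$ by a directed path. $S=k[y_e:e\in\mathbb E]$ over a field $k$. $\mathcal C_D^q\subseteq S$ is generated by $\prod_{e\in\mathbb E:\,e_+\in A,\,e_-\notin A}y_e$ for all nonempty $A\subseteq V\setminus\{q\}$, and $\Sigma_D^q$ is the simplicial complex on the vertex set $\{y_e:e\in\mathbb E\}$ whose Stanley–Reisner ideal is $\mathcal C_D^q$. *)

From mathcomp Require Import all_boot.
Set Implicit Arguments. Unset Strict Implicit. Unset Printing Implicit Defensive.

(* A finite directed multigraph: vertex type V, arc type E (parallel arcs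
   allowed), head/tail maps.  Arc e goes from (tail e) to (head e). *)

Definition arc_rel (V E : finType) (head tail : E -> V) : rel V :=
  fun u v => [exists e : E, (tail e == u) && (head e == v)].

Definition all_reachable_from (V E : finType) (head tail : E -> V) (q : V) : Prop :=
  forall v : V, connect (arc_rel head tail) q v.

(* support of the generator  prod_{e : e_+ in A, e_- notin A} y_e  *)
Definition cut_set (V E : finType) (head tail : E -> V) (A : {set V}) : {set E} :=
  [set e | (head e \in A) && (tail e \notin A)].

(* Faces of Sigma_D^q: the sets F of arcs whose squarefree monomial
   prod_{e in F} y_e is NOT in the squarefree monomial ideal C_D^q, i.e. no
   generator prod_{e in cut_set A} y_e (A nonempty, A subset V \ {q})
   divides it. *)
Definition SR_face (V E : finType) (head tail : E -> V) (q : V) (F : {set E}) : bool :=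
  [forall A : {set V},
     ((A != set0) && (A \subset [set~ q])) ==> ~~ (cut_set head tail A \subset F)].

(* A simplicial complex on a finite vertex type is given by its face predicate. *)
Definition facet (T : finType) (P : pred {set T}) (F : {set T}) : bool :=
  P F && [forall G : {set T}, (P G && (F \subset G)) ==> (G == F)].

(* Shelling order (Bjorner--Wachs, not necessarily pure): a listing
   F_0,...,F_{t-1} of all facets, each exactly once, such that for all
   i < j there are k < j and x in F_j with
   F_i :&: F_j \subset F_j :\ x  and  F_k :&: F_j = F_j :\ x. *)
Definition shelling (T : finType) (P : pred {set T}) (s : seq {set T}) : Prop :=
  [/\ uniq s,
      (forall F, (F \in s) = facet P F) &
      forall j i, j < size s -> i < j ->
        exists k, exists x,
          [/\ k < j, x \in nth set0 s j,
              (nth set0 s i :&: nth set0 s j) \subset (nth set0 s j :\ x) &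
              nth set0 s k :&: nth set0 s j = nth set0 s j :\ x]].

Definition shellable (T : finType) (P : pred {set T}) : Prop :=
  exists s : seq {set T}, shelling P s.

(* Faces of Sigma_D^q are the arc sets whose complement meets every cut
   entering a nonempty A inside V \ {q}; hence facets are the complements of the
   spanning arborescences rooted at q (one arc entering each vertex other than q).
   Record an arborescence T by its greedy word: starting from {q}, repeatedly
   append the arc of T of smallest rank leaving the reached set.  Facets are
   listed by the lexicographic order of the words of their complements.  If the
   word of T_i precedes that of T_j, then at the first difference T_i uses an arc
   a of smaller rank leaving the same reached set.  Replacing in T_j the arc
   entering head a by a gives an arborescence whose word is still smaller than
   that of T_j, and whose complement meets the complement of T_j exactly in that
   facet minus a: this is the exchange condition of a shelling. *)

From mathcomp Require Import all_boot all_order.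
Set Implicit Arguments. Unset Strict Implicit. Unset Printing Implicit Defensive.
Import Order.TTheory.

Lemma uniq_map_inj_in (T1 T2 : eqType) (f : T1 -> T2) (s : seq T1) :
  uniq (map f s) -> {in s &, injective f}.
Proof.
elim: s => //= x s IH /andP[fx_s us] y z; rewrite !inE.
case/predU1P=> [->|ys] /predU1P[->|zs] // eq_f.
- by move: fx_s; rewrite eq_f map_f.
- by move: fx_s; rewrite -eq_f map_f.
- exact: IH.
Qed.

Lemma prefix_map (T1 T2 : eqType) (f : T1 -> T2) (s1 s2 : seq T1) :
  prefix s1 s2 -> prefix (map f s1) (map f s2).
Proof. by case/prefixP=> s ->; rewrite map_cat prefix_prefix. Qed.

Section Lexicographic.
Variables (d : Order.disp_t) (T : orderType d) (x0 : T).
Implicit Types s t : seqlexi T.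

Lemma ltxi_prefix_rcons (w s t : seqlexi T) (x y : T) :
  (x < y)%O -> prefix (rcons w x) s -> prefix (rcons w y) t -> (s < t)%O.
Proof.
move=> lt_xy /prefixP[s' ->] /prefixP[t' ->]; rewrite !cat_rcons.
elim: w => [|z w IH] /=; first by rewrite ltxi_cons ltW // lt_geF.
by rewrite eqhead_ltxiE.
Qed.

Lemma ltxi_first_diff s t : (s < t)%O -> exists p, [/\ take p s = take p t, p < size t &
  p = size s \/ p < size s /\ (nth x0 s p < nth x0 t p)%O].
Proof.
elim: s t => [|x s IH] [|y t] //=; first by exists 0; split=> //; left.
rewrite ltxi_cons; case: (comparableP x y) => //= [xy _|-> /IH[p [tk pt H]]].
  by exists 0; split=> //; right; split.
exists p.+1; split; rewrite /= ?tk ?ltnS //.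
by case: H => [->|]; [left|right].
Qed.
End Lexicographic.

Section ShellingByKey.
Variables (T : finType) (P : pred {set T}) (d : Order.disp_t) (K : orderType d).
Variable key : {set T} -> K.
Hypothesis key_inj : forall F G, facet P F -> facet P G -> key F = key G -> F = G.
Hypothesis key_exchange : forall F G, facet P F -> facet P G -> (key F < key G)%O ->
  exists H x, [/\ facet P H, (key H < key G)%O, x \in G,
                  F :&: G \subset G :\ x & H :&: G = G :\ x].

Lemma shellable_by_key : shellable P.
Proof.
pose leK := fun F G => (key F <= key G)%O.
pose s := sort leK [seq F <- enum {set T} | facet P F].
have mem_s F : (F \in s) = facet P F by rewrite mem_sort mem_filter mem_enum andbT.
have uniq_s : uniq s by rewrite sort_uniq filter_uniq ?enum_uniq.
have key_le i j : i < size s -> j < size s -> i <= j ->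
    (key (nth set0 s i) <= key (nth set0 s j))%O.
  move=> si sj; apply: (sorted_leq_nth (leT := leK)) => //.
  - by move=> F G H; apply: le_trans.
  - by move=> F; apply: lexx.
  - by apply: sort_sorted => F G; apply: le_total.
have facet_nth i : i < size s -> facet P (nth set0 s i) by rewrite -mem_s; apply: mem_nth.
exists s; split=> // j i js ij.
have si : i < size s := ltn_trans ij js.
have ltij : (key (nth set0 s i) < key (nth set0 s j))%O.
  rewrite lt_neqAle key_le ?(ltnW ij) // andbT.
  apply: contraTneq ij => /(key_inj (facet_nth _ si) (facet_nth _ js)) /eqP.
  by rewrite nth_uniq // => /eqP->; rewrite ltnn.
have [H [x [fH ltH xj sub_ij Hj]]] := key_exchange (facet_nth _ si) (facet_nth _ js) ltij.
have Hs : H \in s by rewrite mem_s.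
exists (index H s), x; rewrite nth_index //; split=> //.
rewrite ltnNge; apply: contraTN ltH => ji.
by rewrite -leNgt -{1}(nth_index set0 Hs) key_le ?index_mem.
Qed.
End ShellingByKey.

Section GreedySearch.
Variables (V E : finType) (head tail : E -> V) (q : V).
Implicit Types (G H K T : {set E}) (A B S : {set V}) (w : seq E) (e f : E).

Definition meets_all_cuts G : Prop :=
  forall A, A != set0 -> q \notin A -> exists e, [/\ e \in G, head e \in A & tail e \notin A].

Lemma SR_faceE F : SR_face head tail q F <-> meets_all_cuts (~: F).
Proof.
have subC1 A : (A \subset [set~ q]) = (q \notin A).
  by rewrite subsetC sub1set inE.
split=> [/forallP faceF A A0 qA | cutsF].
  have := faceF A; rewrite A0 subC1 qA /= => /subsetPn[e].
  by rewrite /cut_set !inE => /andP[hA tA] eF; exists e; rewrite inE.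
apply/forallP => A; apply/implyP => /andP[A0]; rewrite subC1 => /(cutsF A A0)[e [eF hA tA]].
by apply/subsetPn; exists e; rewrite ?inE ?hA // -in_setC.
Qed.

Definition arc_rank e : nat := enum_rank e.

Lemma arc_rank_inj : injective arc_rank.
Proof. by move=> e f /val_inj/enum_rank_inj. Qed.

Definition reached w : {set V} := [set v in q :: map head w].

Lemma reached_rcons w e : reached (rcons w e) = head e |: reached w.
Proof.
by apply/setP => v; rewrite !inE map_rcons mem_rcons !inE orbCA.
Qed.

Definition leaving G S e := [&& e \in G, tail e \in S & head e \notin S].

Definition first_leaving G S : option E :=
  [pick e | leaving G S e & [forall f, leaving G S f ==> (arc_rank e <= arc_rank f)]].

Variant first_leaving_spec G S : option E -> Prop :=
  | FirstLeavingNone of (forall e, ~~ leaving G S e) : first_leaving_spec G S None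
  | FirstLeavingSome e of leaving G S e & (forall f, leaving G S f -> arc_rank e <= arc_rank f) :
      first_leaving_spec G S (Some e).

Lemma first_leavingP G S : first_leaving_spec G S (first_leaving G S).
Proof.
rewrite /first_leaving; case: pickP => [e /andP[le /forallP min_e] | none].
  by constructor=> // f lf; have := min_e f; rewrite lf.
constructor=> e; apply/negP => le.
have [m lm min_m] := arg_minnP arc_rank le.
have := none m; rewrite lm; move/negP; apply; apply/forallP => f.
exact/implyP/min_m.
Qed.

Lemma first_leaving_eq G S e : leaving G S e ->
  (forall f, leaving G S f -> arc_rank e <= arc_rank f) -> first_leaving G S = Some e.
Proof.
move=> le min_e; case: first_leavingP => [/(_ e)|f lf min_f]; first by rewrite le.
by congr Some; apply/arc_rank_inj/eqP; rewrite eqn_leq min_e // min_f.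
Qed.

Lemma first_leaving_Some G S e : first_leaving G S = Some e ->
  leaving G S e /\ forall f, leaving G S f -> arc_rank e <= arc_rank f.
Proof. by case: first_leavingP => [_ //|e' le' min_e' [<-]]. Qed.

Lemma first_leaving_None G S : first_leaving G S = None -> forall e, ~~ leaving G S e.
Proof. by case: first_leavingP. Qed.

Fixpoint search G n : seq E :=
  if n is n'.+1 then
    let w := search G n' in
    if first_leaving G (reached w) is Some e then rcons w e else w
  else [::].

Definition search_word G := search G #|V|.

Lemma search_size G n : size (search G n) <= n.
Proof. by elim: n => //= n IH; case: first_leaving => [e|]; [rewrite size_rcons | exact: leqW]. Qed.

Lemma search_full G n : size (search G n.+1) = n.+1 ->
  exists2 e, first_leaving G (reached (search G n)) = Some e & search G n.+1 = rcons (search G n) e.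
Proof.
rewrite /=; case: first_leaving => [e _|sz]; first by exists e.
by have := search_size G n; rewrite sz ltnn.
Qed.

Lemma search_stop G n : size (search G n) < n -> first_leaving G (reached (search G n)) = None.
Proof.
elim: n => //= n IH; case fl: first_leaving => [e|]; last by rewrite fl.
by rewrite size_rcons ltnS => /IH; rewrite fl.
Qed.

Lemma search_nth G n t e0 : t < size (search G n) ->
  first_leaving G (reached (take t (search G n))) = Some (nth e0 (search G n) t).
Proof.
elim: n => //= n IH; case fl: first_leaving => [e|]; last exact: IH.
rewrite size_rcons ltnS leq_eqVlt => /orP[/eqP->|lt_t].
  by rewrite -cats1 take_size_cat ?nth_cat ?ltnn ?subnn; first exact: fl.
rewrite -cats1 takel_cat ?nth_cat ?lt_t; first exact: IH.
exact: ltnW.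
Qed.

Lemma search_take G n t : t <= size (search G n) -> search G t = take t (search G n).
Proof.
elim: t => [|t IH] lt_t; first by rewrite take0.
have e0 : E by case: (search G n) lt_t => // e.
rewrite /= IH; last exact: ltnW.
by rewrite (search_nth e0 lt_t) -take_nth.
Qed.

Lemma search_prefix G m n : m <= n -> prefix (search G m) (search G n).
Proof.
move=> /subnKC <-; elim: (n - m) => [|k IH]; first by rewrite addn0 prefix_refl.
rewrite addnS /=; case: first_leaving => [e|]; last exact: IH.
exact: prefix_trans IH (prefix_rcons _ _).
Qed.

Lemma search_heads_uniq G n : uniq (q :: map head (search G n)).
Proof.
elim: n => [//|n IH]; rewrite [search G n.+1]/=.
case: first_leavingP => [_|e /and3P[_ _ he] _]; first exact: IH.
by move: he; rewrite map_rcons -rcons_cons rcons_uniq IH andbT inE.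
Qed.

Lemma search_sub G n e : e \in search G n -> (e \in G) && (tail e \in reached (search G n)).
Proof.
elim: n => [|n IH] /=; first by [].
case: first_leavingP => [_|f /and3P[fG ft _] _]; first exact: IH.
rewrite reached_rcons mem_rcons in_cons => /predU1P[->|/IH/andP[-> te]].
  by rewrite fG in_setU1 ft orbT.
by rewrite in_setU1 te orbT.
Qed.

Lemma search_step G n e : first_leaving G (reached (search G n)) = Some e ->
  size (search G n) = n /\ search G n.+1 = rcons (search G n) e.
Proof.
move=> fl; split; last by rewrite /= fl.
apply/eqP; rewrite eqn_leq search_size leqNgt; apply/negP => /search_stop.
by rewrite fl.
Qed.

Lemma search_size_lt G n : size (search G n) < #|V|.
Proof.
have /card_uniqP := search_heads_uniq G n; rewrite /= size_map => <-.
exact: max_card.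
Qed.

Lemma search_enters G n B : B != set0 -> B \subset reached (search G n) -> q \notin B ->
  exists e, [/\ e \in search G n, head e \in B & tail e \notin B].
Proof.
elim: n B => [|n IH] B B0 /=.
  move=> sB qB; case/set0Pn: B0 => v vB.
  by move: (subsetP sB v vB) qB; rewrite !inE => /eqP <-; rewrite vB.
case: first_leavingP => [_|f /and3P[_ ft fh] _]; first exact: IH.
rewrite reached_rcons => sB qB.
have in_rcons e : e \in search G n -> e \in rcons (search G n) f.
  by rewrite mem_rcons inE => ->; rewrite orbT.
have [hB|hB] := boolP (head f \in B); last first.
  have sB' : B \subset reached (search G n).
    apply/subsetP => v vB; move: (subsetP sB v vB); rewrite in_setU1.
    by case/predU1P => // vf; move: hB; rewrite -vf vB.
  by have [e [ew eB teB]] := IH B B0 sB' qB; exists e; rewrite in_rcons.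
have [tB|tB] := boolP (tail f \in B); last by exists f; rewrite mem_rcons mem_head.
have B0' : B :\ head f != set0.
  by apply/set0Pn; exists (tail f); rewrite !inE tB andbT; apply: contraNneq fh => <-.
have sB' : B :\ head f \subset reached (search G n) by rewrite subDset.
have qB' : q \notin B :\ head f by rewrite !inE (negbTE qB) andbF.
have [e [ew eB teB]] := IH _ B0' sB' qB'.
exists e; split; first exact: in_rcons.
  by move: eB; rewrite !inE => /andP[].
have /andP[_ teS] := search_sub ew.
move: teB; rewrite !inE negb_and negbK => /predU1P[tef|//].
by move: fh; rewrite -tef teS.
Qed.

Lemma search_word_reached G : meets_all_cuts G -> reached (search_word G) = setT.
Proof.
move=> cutsG; apply/eqP; apply: contraT => ne; set w := search_word G.
have A0 : ~: reached w != set0.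
  by apply: contraNneq ne => /(congr1 (@setC _)); rewrite setCK setC0 => ->.
have qA : q \notin ~: reached w by rewrite !inE eqxx.
have [e [eG]] := cutsG _ A0 qA; rewrite !in_setC negbK => hw tw.
case: first_leavingP (search_stop (search_size_lt G #|V|)) => [none _|//].
by have := none e; rewrite /leaving eG tw hw.
Qed.

Lemma search_word_size G : meets_all_cuts G -> (size (search_word G)).+1 = #|V|.
Proof.
move=> cutsG; have /card_uniqP := search_heads_uniq G #|V|.
rewrite /= size_map => <-.
by rewrite -[X in X = _]cardsE -/(reached _) -/(search_word G) search_word_reached // cardsT.
Qed.

Lemma search_word_meets_all_cuts G : meets_all_cuts G -> meets_all_cuts [set e in search_word G].
Proof.
move=> cutsG A A0 qA.
have sA : A \subset reached (search_word G) by rewrite search_word_reached ?subsetT.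
have [e [ew eA teA]] := search_enters A0 sA qA.
by exists e; rewrite inE.
Qed.


Lemma search_sub_union G K H n : search G n = search K n -> size (search K n) = n ->
  {subset search K n <= H} -> H \subset G :|: K -> search H n = search K n.
Proof.
move=> + + + sH; elim: n => [//|n IH] eqGK szK subH.
have [b fl_K eqK] := search_full szK.
have [b' fl_G eqG] := search_full (etrans (congr1 size eqGK) szK).
move: (eqGK); rewrite eqG eqK => /rcons_inj[eqGKn eqb]; rewrite eqb eqGKn in fl_G.
have szKn : size (search K n) = n by move: szK; rewrite eqK size_rcons => -[].
have subHn : {subset search K n <= H}.
  by move=> e ew; apply: subH; rewrite eqK mem_rcons in_cons ew orbT.
have [/and3P[_ tb hb] min_K] := first_leaving_Some fl_K.
have [_ min_G] := first_leaving_Some fl_G.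
rewrite [search H n.+1]/= (IH eqGKn szKn subHn) (first_leaving_eq (e := b)).
- by [].
- by rewrite /leaving tb hb subH // eqK mem_rcons mem_head.
move=> f /and3P[fH tf hf]; case/setUP: (subsetP sH f fH) => [fG|fK].
- by apply: min_G; rewrite /leaving fG tf hf.
- by apply: min_K; rewrite /leaving fK tf hf.
Qed.

Lemma facet_search_word F : facet (SR_face head tail q) F -> ~: F = [set e in search_word (~: F)].
Proof.
case/andP => /SR_faceE cutsF /forallP maxF; set W := [set e in search_word (~: F)].
have sW : W \subset ~: F by apply/subsetP => e; rewrite inE => /search_sub/andP[].
have faceW : SR_face head tail q (~: W).
  by apply/SR_faceE; rewrite setCK; exact: search_word_meets_all_cuts.
by have := maxF (~: W); rewrite faceW subsetC sW => /eqP <-; rewrite setCK.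
Qed.

Lemma tree_facet T : meets_all_cuts T -> {in T, forall e, head e != q} ->
  {in T &, injective head} -> facet (SR_face head tail q) (~: T).
Proof.
move=> cutsT head_q head_inj; apply/andP; split; first by apply/SR_faceE; rewrite setCK.
apply/forallP => F; apply/implyP => /andP[/SR_faceE cutsF]; rewrite subCset => sF.
rewrite eqEsubset subCset sF andbT subsetC; apply/subsetP => e eT.
have A0 : [set head e] != set0 by apply/set0Pn; exists (head e); rewrite inE.
have qA : q \notin [set head e] by rewrite inE eq_sym head_q.
have [g [gF /set1P hg _]] := cutsF _ A0 qA.
by rewrite -(head_inj g e (subsetP sF g gF) eT hg).
Qed.

Definition reroute T a := a |: [set e in T | head e != head a].

Lemma reroute_meets_all_cuts T n a : meets_all_cuts T ->
  tail a \in reached (search T n) -> head a \notin reached (search T n) ->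
  meets_all_cuts (reroute T a).
Proof.
move=> cutsT ta ha A A0 qA; have [g [gT gA tg]] := cutsT A A0 qA.
have [hg|/negbNE/eqP hg] := boolP (head g != head a).
  by exists g; rewrite !inE gT hg orbT.
have [taA|taA] := boolP (tail a \in A); last by exists a; rewrite setU11 -hg.
set S := reached (search T n).
have AS0 : A :&: S != set0 by apply/set0Pn; exists (tail a); rewrite inE taA.
have qAS : q \notin A :&: S by rewrite inE (negbTE qA).
have [e [ew /setIP[eA eS] teAS]] := search_enters AS0 (subsetIr A S) qAS.
have /andP[eT teS] := search_sub ew.
exists e; split=> //; last by move: teAS; rewrite inE teS andbT.
by rewrite !inE eT /=; apply/orP; right; apply: contraNneq ha => <-.
Qed.

Lemma reroute_facet T n a : meets_all_cuts T -> T = [set e in search_word T] ->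
  tail a \in reached (search T n) -> head a \notin reached (search T n) ->
  facet (SR_face head tail q) (~: reroute T a).
Proof.
move=> cutsT defT ta ha.
have /andP[qw uw] : (q \notin map head (search_word T)) && uniq (map head (search_word T)).
  by rewrite -cons_uniq search_heads_uniq.
have head_inj : {in T &, injective head}.
  by move=> e1 e2; rewrite defT !inE => e1w e2w; exact: (uniq_map_inj_in uw e1w e2w).
apply: tree_facet; first exact: reroute_meets_all_cuts ta ha.
- move=> e; rewrite !inE => /predU1P[->|/andP[eT _]].
    by apply: contraNneq ha => ->; rewrite !inE eqxx.
  by apply: contraNneq qw => <-; apply: map_f; move: eT; rewrite {1}defT inE.
- move=> e1 e2; rewrite !inE => /predU1P[->|/andP[e1T h1]] /predU1P[->|/andP[e2T h2]] //.
  + by move=> hh; move: h2; rewrite -hh eqxx.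
  + by move=> hh; move: h1; rewrite hh eqxx.
  + exact: head_inj.
Qed.

Definition tree_key T : seqlexi nat := map arc_rank (search_word T).

Lemma tree_key_inj F G : facet (SR_face head tail q) F -> facet (SR_face head tail q) G ->
  tree_key (~: F) = tree_key (~: G) -> F = G.
Proof.
move=> fF fG /(inj_map arc_rank_inj) eq_w; apply: setC_inj.
by rewrite (facet_search_word fF) (facet_search_word fG) eq_w.
Qed.

Lemma reroute_tree_key_lt Ti Tj n a b :
  search Ti n = search Tj n ->
  first_leaving Ti (reached (search Tj n)) = Some a ->
  first_leaving Tj (reached (search Tj n)) = Some b ->
  arc_rank a < arc_rank b -> (tree_key (reroute Tj a) < tree_key Tj)%O.
Proof.
move=> eq_n fl_i fl_j lt_ab; set w := search Tj n; set T' := reroute Tj a.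
have [/and3P[aTi ta ha] _] := first_leaving_Some fl_i.
have [sz_w step_j] := search_step fl_j.
have eqT' : search T' n = w.
  apply: search_sub_union eq_n sz_w _ _.
  - move=> e ew; have /andP[eT _] := search_sub ew.
    rewrite !inE eT /=; apply/orP; right; apply: contraNneq ha => <-.
    by rewrite inE in_cons map_f ?orbT.
  - by apply/subsetP => e; rewrite !inE => /predU1P[->|/andP[eT _]]; rewrite ?aTi ?eT ?orbT.
have la : leaving T' (reached w) a by rewrite /leaving setU11 ta ha.
case fl_T': (first_leaving T' (reached w)) => [e'|]; last first.
  by move: (first_leaving_None fl_T' a); rewrite la.
have [_ min_e'] := first_leaving_Some fl_T'.
rewrite -eqT' in fl_T'; have [_ step'] := search_step fl_T'; rewrite eqT' in step'.
have le_n : n.+1 <= #|V| by rewrite -sz_w; exact: search_size_lt.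
apply: (ltxi_prefix_rcons (w := map arc_rank w) (x := arc_rank e') (y := arc_rank b)).
- exact: leq_ltn_trans (min_e' a la) lt_ab.
- by rewrite -map_rcons -step'; apply: prefix_map; exact: search_prefix.
- by rewrite -map_rcons -step_j; apply: prefix_map; exact: search_prefix.
Qed.

Lemma facet_exchange F G : facet (SR_face head tail q) F -> facet (SR_face head tail q) G ->
  (tree_key (~: F) < tree_key (~: G))%O ->
  exists H x, [/\ facet (SR_face head tail q) H, (tree_key (~: H) < tree_key (~: G))%O,
                  x \in G, F :&: G \subset G :\ x & H :&: G = G :\ x].
Proof.
move=> fF fG /(ltxi_first_diff 0) [p []].
rewrite -!map_take !size_map => /(inj_map arc_rank_inj) eq_take lt_pG.
have cutsF : meets_all_cuts (~: F) by apply/SR_faceE; case/andP: fF.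
have cutsG : meets_all_cuts (~: G) by apply/SR_faceE; case/andP: fG.
case=> [p_sz|[lt_pF]].
  (* arborescence words all have length #|V| - 1, so neither is a proper prefix *)
  have := search_word_size cutsF; rewrite -(search_word_size cutsG) => -[sz_eq].
  by move: lt_pG; rewrite -sz_eq -p_sz ltnn.
have e0 : E by case: (search_word (~: G)) lt_pG.
rewrite !(nth_map e0) // => lt_ab.
set a := nth e0 (search_word (~: F)) p; set b := nth e0 (search_word (~: G)) p.
have {}lt_ab : arc_rank a < arc_rank b by exact: lt_ab.
have take_F := search_take (ltnW lt_pF); have take_G := search_take (ltnW lt_pG).
have eq_p : search (~: F) p = search (~: G) p by rewrite take_F take_G.
have fl_F : first_leaving (~: F) (reached (search (~: G) p)) = Some a.
  by rewrite -eq_p take_F; exact: search_nth.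
have fl_G : first_leaving (~: G) (reached (search (~: G) p)) = Some b.
  by rewrite take_G; exact: search_nth.
have [/and3P[aF ta ha] _] := first_leaving_Some fl_F.
have [_ min_b] := first_leaving_Some fl_G.
have aG : a \in G.
  rewrite -[G]setCK inE; apply/negP => aG'.
  by have := min_b a; rewrite /leaving aG' ta ha leqNgt lt_ab => /(_ isT).
exists (~: reroute (~: G) a), a; split=> //.
- exact: reroute_facet cutsG (facet_search_word fG) ta ha.
- by rewrite setCK; exact: reroute_tree_key_lt eq_p fl_F fl_G lt_ab.
- apply/subsetP => e /setIP[eF eG]; rewrite !inE eG andbT.
  by apply: contraTneq aF => <-; rewrite inE negbK.
- by apply/setP => e; rewrite !inE; case: (e == a); case: (e \in G); rewrite ?andbF.
Qed.

End GreedySearch.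

Theorem mainTheorem6 (V E : finType) (head tail : E -> V) (q : V)
  (no_loops : forall e : E, head e != tail e)
  (reach : all_reachable_from head tail q) :
  shellable (SR_face head tail q).
Proof.
apply: (shellable_by_key (key := fun F => tree_key head tail q (~: F))).
- exact: tree_key_inj.
- exact: facet_exchange.
Qed.
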